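(* Let $g\ge2$, $n\ge1$ and $d\in\mathbb Z$. For $j=2,\dots,n$ let $T_j$ and let $S$ be the operators on degree $d$ universal stability conditions of type $(g,n)$ given by $T_j(\mathfrak m)_{(e,h,A)}=\mathfrak m_{(e,h,A)}+1$ if $1\in A,j\notin A$; $=\mathfrak m_{(e,h,A)}-1$ if $1\notin A, j\in A$; $=\mathfrak m_{(e,h,A)}$ otherwise; and $S(\mathfrak m)_{(e,h,A)}=\mathfrak m_{(e,h,A)}+2g-2h-e$ if $1\in A$, $=\mathfrak m_{(e,h,A)}-(2h+e-2)$ if $1\notin A$. These operators (which correspond to tensoring the associated Jacobian with $\mathcal O(\Sigma_1-\Sigma_j)$ and $\mathcal O((2g-2)\Sigma_1)\otimes\omega_\pi^{-1}$ respectively) generate a group action on the set of degree $d$ universal stability conditions of type $(g,n)$, and every orbit of this action contains exactly one $\mathfrak m$ satisfying $\mathfrak m_{(2,0,\{1\})}\in\{0,1,\dots,2g-3\}$ and $\mathfrak m_{(2,0,\{i\})}=0$ for all $i\in\{2,\dots,n\}$.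
   Context: Fix $g\ge2$, $n\ge1$, $[n]=\{1,\dots,n\}$. The vine graph $V(e,h,A)$ has two vertices $v_1,v_2$ joined by $e$ edges, no loops, with vertex genera $g(v_1)=h$, $g(v_2)=g+1-e-h$ and markings $A$ at $v_1$, $[n]\setminus A$ at $v_2$; it is stable if $2h-2+e+|A|>0$ and $2(g+1-e-h)-2+e+n-|A|>0$. $\mathcal D_{g,n}$ is the set of triples $(e,h,A)$ with $e\ge1$, $h\ge0$, $g+1-e-h\ge0$, $A\subseteq[n]$ and $V(e,h,A)$ stable. A degree $d$ universal stability condition of type $(g,n)$ is a family of integers $(\mathfrak m_{(e,h,A)})_{(e,h,A)\in\mathcal D_{g,n}}$ such that (i) $\mathfrak m_{(e,h,A)}+\mathfrak m_{(e,g+1-e-h,[n]\setminus A)}=d+1-e$ for all $(e,h,A)$, and (ii) $0\le \mathfrak m_{(e,h,A)}-h-(\mathfrak m_{(e',h',A')}-h')-(\mathfrak m_{(e'',h'',A'')}-h'')\le1$ whenever $A=A'\sqcup A''$, $2(h+1-h'-h'')=e'+e''-e$, and $e<e'+e''$, $e'<e+e''$, $e''<e+e'$. *)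

From mathcomp Require Import all_boot all_order all_algebra.
From Stdlib Require Import Relations.
Unset Printing Implicit Defensive.
Import Order.TTheory GRing.Theory Num.Theory.
Local Open Scope ring_scope.

(* Markings [n] = {1,...,n} are represented by 'I_n : the marking k+1
   corresponds to the ordinal with value k.  So marking 1 is the ordinal
   of value 0, and markings 2..n are the ordinals j with 1 <= val j. *)

Definition has1 (n : nat) (A : {set 'I_n}) : bool :=
  [exists i in A, val i == 0%N].

Definition set_one (n : nat) : {set 'I_n} := [set i | val i == 0%N].

(* A family indexed by triples (e,h,A): values outside D_{g,n} are
   irrelevant and normalised to 0. *)
Definition family (n : nat) := nat -> nat -> {set 'I_n} -> int.

Definition inD (g n : nat) (e h : nat) (A : {set 'I_n}) : bool :=
  [&& (1 <= e)%N, (e + h <= g + 1)%N,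
      (0 < 2 * h%:Z - 2 + e%:Z + #|A|%:Z) &
      (0 < 2 * (g%:Z + 1 - e%:Z - h%:Z) - 2 + e%:Z + n%:Z - #|A|%:Z)].

Definition UnivStab (g n : nat) (d : int) (m : family n) : Prop :=
  (forall e h A, ~~ inD g n e h A -> m e h A = 0) /\
  (forall e h A, inD g n e h A ->
     m e h A + m e (g + 1 - e - h)%N (~: A) = d + 1 - e%:Z) /\
  (forall e h A e' h' A' e'' h'' A'',
     inD g n e h A -> inD g n e' h' A' -> inD g n e'' h'' A'' ->
     A' :&: A'' = set0 -> A = A' :|: A'' ->
     2 * (h%:Z + 1 - h'%:Z - h''%:Z) = e'%:Z + e''%:Z - e%:Z ->
     (e < e' + e'')%N -> (e' < e + e'')%N -> (e'' < e + e')%N ->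
     0 <= (m e h A - h%:Z) - (m e' h' A' - h'%:Z) - (m e'' h'' A'' - h''%:Z)
       <= 1).

Definition opT (g n : nat) (j : 'I_n) (m : family n) : family n :=
  fun e h A =>
    if inD g n e h A then
      if has1 n A && (j \notin A) then m e h A + 1
      else if ~~ has1 n A && (j \in A) then m e h A - 1
      else m e h A
    else m e h A.

Definition opS (g n : nat) (m : family n) : family n :=
  fun e h A =>
    if inD g n e h A then
      if has1 n A then m e h A + (2 * g%:Z - 2 * h%:Z - e%:Z)
      else m e h A - (2 * h%:Z + e%:Z - 2)
    else m e h A.

Definition gen_step (g n : nat) (d : int) (m m' : family n) : Prop :=
  UnivStab g n d m /\ UnivStab g n d m' /\
  ((exists j : 'I_n, (1 <= val j)%N /\ m' = opT g n j m) \/ m' = opS g n m).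

Definition same_orbit (g n : nat) (d : int) : relation (family n) :=
  clos_refl_sym_trans (family n) (gen_step g n d).

Definition normalized (g n : nat) (m : family n) : Prop :=
  (0 <= m 2%N 0%N (set_one n) <= 2 * g%:Z - 3) /\
  (forall i : 'I_n, (1 <= val i)%N -> m 2%N 0%N [set i] = 0).

From Pilot Require Import Defs.
From mathcomp Require Import all_boot all_order all_algebra.
From mathcomp Require Import zify ring.
From Stdlib Require Import FunctionalExtensionality Relations.
Import Order.TTheory GRing.Theory Num.Theory.
Local Open Scope ring_scope.

(* Each generator translates [m], on D_{g,n}, by the degree on the component
   v_1 of a line bundle O(sum_i c_i Sigma_i) (x) omega^(-b) of total degree 0,
   i.e. by [twist c b] with sum_i c_i = b (2g - 2).  Such translations preserve
   both axioms: the twist is additive along the splittings of condition (ii),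
   and complementary vines receive opposite twists.  The balanced pairs (c, b)
   are exactly the group generated by T_j and S, so an orbit is the set of
   balanced translates of any of its members.  On V(2,0,{i}) the translation
   adds c_i: one can kill these values for i <> 1 and reduce the value for
   i = 1 modulo 2g - 2, and nothing else is possible. *)

Lemma family_ext n (m m' : Defs.family n) : (forall e h A, m e h A = m' e h A) -> m = m'.
Proof.
move=> E; apply: functional_extensionality => e.
apply: functional_extensionality => h; apply: functional_extensionality => A.
exact: E.
Qed.

Lemma sum_indicator (T : finType) (R : pzSemiRingType) (P : pred T) (k : T) :
  \sum_(i | P i) (i == k)%:R = (P k)%:R :> R.
Proof.
case Pk: (P k).
  by rewrite (bigD1 k) //= eqxx big1 ?addr0 // => i /andP[_ /negPf ->].
by rewrite big1 // => i Pi; case: eqP Pi => // ->; rewrite Pk.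
Qed.

Lemma window_unique {g : nat} {y b : int} : (2 <= g)%N ->
  0 <= y <= 2 * g%:Z - 3 -> 0 <= y + b * (2 * g%:Z - 2) <= 2 * g%:Z - 3 -> b = 0.
Proof. by move=> g_ge2 /andP[? ?] /andP[? ?]; nia. Qed.

Section UniversalStability.
Set Implicit Arguments.
Unset Strict Implicit.
Variables (g n : nat) (d : int).

(* The degree of omega on the genus-h vertex of V(e,h,A) is 2h - 2 + e. *)
Definition twist (c : {ffun 'I_n -> int}) (b : int) : Defs.family n :=
  fun e h A => \sum_(i in A) c i - b * (2 * h%:Z + e%:Z - 2).

Definition balanced (c : {ffun 'I_n -> int}) (b : int) : Prop :=
  \sum_i c i = b * (2 * g%:Z - 2).

Definition shift (c : {ffun 'I_n -> int}) (b : int) (m : Defs.family n) : Defs.family n :=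
  fun e h A => if inD g n e h A then m e h A + twist c b e h A else m e h A.

Lemma inD_compl e h A : inD g n e h A -> inD g n e (g + 1 - e - h)%N (~: A).
Proof.
rewrite /inD => /and4P[e_gt0 eh_le p1 p2].
have := cardsC A; rewrite card_ord => cardA.
by apply/and4P; split; lia.
Qed.

Lemma twist_compl c b e h A : balanced c b -> inD g n e h A ->
  twist c b e h A + twist c b e (g + 1 - e - h)%N (~: A) = 0.
Proof.
rewrite /balanced /twist => bal /and4P[_ eh_le _ _].
have -> : (g + 1 - e - h)%N%:Z = g%:Z + 1 - e%:Z - h%:Z by lia.
have sumC : \sum_(i in A) c i + \sum_(i in ~: A) c i = \sum_i c i.
  by rewrite [RHS](bigID (mem A)) /=; congr (_ + _); apply: eq_bigl => i; rewrite inE.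
rewrite addrACA sumC bal; ring.
Qed.

Lemma twist_split c b e h A e' h' A' e'' h'' A'' :
  A' :&: A'' = set0 -> A = A' :|: A'' ->
  2 * (h%:Z + 1 - h'%:Z - h''%:Z) = e'%:Z + e''%:Z - e%:Z ->
  twist c b e h A = twist c b e' h' A' + twist c b e'' h'' A''.
Proof.
move=> disj -> hh.
have sumU : \sum_(i in A' :|: A'') c i = \sum_(i in A') c i + \sum_(i in A'') c i.
  by rewrite -bigU -?setI_eq0 ?disj //; apply: eq_bigl => i; rewrite !inE.
have degU : 2 * h%:Z + e%:Z - 2 = (2 * h'%:Z + e'%:Z - 2) + (2 * h''%:Z + e''%:Z - 2) by lia.
rewrite /twist sumU degU; ring.
Qed.

Lemma univStab_shift c b m : balanced c b -> UnivStab g n d m -> UnivStab g n d (shift c b m).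
Proof.
move=> bal [m_out [m_compl m_tri]]; split; [|split].
- by move=> e h A hA; rewrite /shift (negPf hA); apply: m_out.
- move=> e h A hA; rewrite /shift hA (inD_compl hA) addrACA twist_compl // addr0.
  exact: m_compl.
- move=> e h A e' h' A' e'' h'' A'' hA hA' hA'' disj U hh lt1 lt2 lt3.
  rewrite /shift hA hA' hA'' (twist_split c b disj U hh).
  set t' := twist c b e' h' A'; set t'' := twist c b e'' h'' A''.
  have -> : m e h A + (t' + t'') - h%:Z - (m e' h' A' + t' - h'%:Z) -
      (m e'' h'' A'' + t'' - h''%:Z) =
      m e h A - h%:Z - (m e' h' A' - h'%:Z) - (m e'' h'' A'' - h''%:Z) by ring.
  exact: m_tri.
Qed.

Lemma twistD c b c' b' e h A :
  twist (c + c') (b + b') e h A = twist c b e h A + twist c' b' e h A.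
Proof. by rewrite /twist; under eq_bigr do rewrite ffunE; rewrite big_split /=; ring. Qed.

Lemma shift_comp c b c' b' m : shift c' b' (shift c b m) = shift (c + c') (b + b') m.
Proof. by apply: family_ext => e h A; rewrite /shift twistD; case: inD; rewrite ?addrA. Qed.

Lemma shift0 m : shift 0 0 m = m.
Proof.
apply: family_ext => e h A; rewrite /shift /twist big1 => [|i _]; last by rewrite ffunE.
by case: inD; rewrite // mul0r subrr addr0.
Qed.

Lemma shiftK c b m : shift (- c) (- b) (shift c b m) = m.
Proof. by rewrite shift_comp !addrN shift0. Qed.

Lemma shiftNK c b m : shift c b (shift (- c) (- b) m) = m.
Proof. by rewrite shift_comp !addNr shift0. Qed.

Lemma balanced0 : balanced 0 0.
Proof. by rewrite /balanced mul0r big1 // => i _; rewrite ffunE. Qed.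

Lemma balancedD c b c' b' : balanced c b -> balanced c' b' -> balanced (c + c') (b + b').
Proof.
rewrite /balanced => bal bal'; under eq_bigr do rewrite ffunE.
by rewrite big_split /= bal bal' -mulrDl.
Qed.

Lemma balancedN c b : balanced c b -> balanced (- c) (- b).
Proof. by rewrite /balanced => bal; under eq_bigr do rewrite ffunE; rewrite sumrN bal mulNr. Qed.

Lemma balancedMz c b k : balanced c b -> balanced (c *~ k) (b * k).
Proof.
rewrite /balanced => bal; under eq_bigr do rewrite ffunMzE mulrzz.
by rewrite -mulr_suml bal mulrAC.
Qed.

Lemma univStab_shift_bij c b : balanced c b ->
  (forall m, UnivStab g n d m -> UnivStab g n d (shift c b m)) /\
  (forall m', UnivStab g n d m' -> exists! m, UnivStab g n d m /\ shift c b m = m').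
Proof.
move=> bal; split => [m|m' hm']; first exact: univStab_shift.
exists (shift (- c) (- b) m'); split.
  by split; [exact: univStab_shift (balancedN bal) hm' | exact: shiftNK].
by move=> m [_ <-]; rewrite shiftK.
Qed.

Hypothesis g_ge2 : (2 <= g)%N.

Lemma inD_set1 k : inD g n 2 0 [set k].
Proof. by rewrite /inD cards1; have := ltn_ord k; lia. Qed.

Lemma shift_set1 c b m k : shift c b m 2 0 [set k] = m 2%N 0%N [set k] + c k.
Proof. by rewrite /shift inD_set1 /twist big_set1; ring. Qed.

Section MarkingOne.

Variable i0 : 'I_n.
Hypothesis i0_val : val i0 = 0%N.

Lemma neq_i0E i : (i != i0) = (0 < val i)%N.
Proof. by rewrite lt0n -i0_val val_eqE. Qed.

Lemma has1E A : has1 n A = (i0 \in A).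
Proof.
apply/existsP/idP => [[i /andP[iA /eqP i_val]]|i0A]; last by exists i0; rewrite i0A i0_val.
by have -> : i0 = i by apply: val_inj; rewrite i0_val i_val.
Qed.

Lemma set_oneE : set_one n = [set i0].
Proof. by apply/setP => i; rewrite !inE -val_eqE i0_val. Qed.

Definition genT (j : 'I_n) : {ffun 'I_n -> int} := [ffun i => (i == i0)%:R - (i == j)%:R].

Definition genS : {ffun 'I_n -> int} := [ffun i => (2 * g%:Z - 2) * (i == i0)%:R].

Lemma balanced_genT j : balanced (genT j) 0.
Proof.
rewrite /balanced mul0r; under eq_bigr do rewrite ffunE.
by rewrite sumrB !sum_indicator subrr.
Qed.

Lemma balanced_genS : balanced genS 1.
Proof.
rewrite /balanced; under eq_bigr do rewrite ffunE.
by rewrite -mulr_sumr sum_indicator mulr1 mul1r.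
Qed.

Lemma opT_shift j : (0 < val j)%N -> opT g n j = shift (genT j) 0.
Proof.
rewrite -neq_i0E => j_neq; apply: functional_extensionality => m.
apply: family_ext => e h A; rewrite /opT /shift /twist mul0r subr0.
under eq_bigr do rewrite ffunE.
rewrite sumrB !sum_indicator has1E.
by case: inD => //; case: (i0 \in A); case: (j \in A) => /=; ring.
Qed.

Lemma opS_shift : opS g n = shift genS 1.
Proof.
apply: functional_extensionality => m.
apply: family_ext => e h A; rewrite /opS /shift /twist.
under eq_bigr do rewrite ffunE.
rewrite -mulr_sumr sum_indicator has1E.
by case: inD => //; case: (i0 \in A) => /=; ring.
Qed.

Lemma same_orbit_shift m1 m2 : same_orbit g n d m1 m2 ->
  exists c b, balanced c b /\ m2 = shift c b m1.
Proof.
elim=> {m1 m2} [m1 m2 [_ [_ [[j [j_gt0 ->]] | ->]]] | m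
  | m1 m2 _ [c [b [bal ->]]] | m1 m2 m3 _ [c [b [bal ->]]] _ [c' [b' [bal' ->]]]].
- by exists (genT j), 0; rewrite opT_shift //; split; [exact: balanced_genT|].
- by exists genS, 1; rewrite opS_shift; split; [exact: balanced_genS|].
- by exists 0, 0; rewrite shift0; split; [exact: balanced0|].
- by exists (- c), (- b); rewrite shiftK; split; [exact: balancedN|].
- by exists (c + c'), (b + b'); rewrite shift_comp; split; [exact: balancedD|].
Qed.

Definition reachable c b : Prop :=
  forall m, UnivStab g n d m -> same_orbit g n d m (shift c b m).

Lemma reachable0 : reachable 0 0.
Proof. by move=> m _; rewrite shift0; apply: rst_refl. Qed.

Lemma reachableD c b c' b' : balanced c b -> reachable c b -> reachable c' b' ->
  reachable (c + c') (b + b').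
Proof.
move=> bal r r' m hm; rewrite -shift_comp.
exact: rst_trans (r m hm) (r' _ (univStab_shift bal hm)).
Qed.

Lemma reachableN c b : balanced c b -> reachable c b -> reachable (- c) (- b).
Proof.
move=> bal r m hm; apply: rst_sym.
by have := r _ (univStab_shift (balancedN bal) hm); rewrite shiftNK.
Qed.

Lemma reachableMz c b k : balanced c b -> reachable c b -> reachable (c *~ k) (b * k).
Proof.
move=> bal r.
have reachable_nat (l : nat) : reachable (c *~ l) (b * l%:Z).
  elim: l => [|l IH]; first by rewrite mulr0z mulr0; exact: reachable0.
  by rewrite intS mulrzDr mulr1z mulrDr mulr1; apply: reachableD.
case: k => l; first exact: reachable_nat.
rewrite NegzE mulrNz mulrN; apply: reachableN (reachable_nat _).
exact: balancedMz.
Qed.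

Lemma reachable_genT j : reachable (genT j) 0.
Proof.
have [->|] := eqVneq j i0.
  have -> : genT i0 = 0 by apply/ffunP => i; rewrite !ffunE subrr.
  exact: reachable0.
rewrite neq_i0E => j_gt0 m hm; apply: rst_step; split; [done | split].
  exact: univStab_shift (balanced_genT j) hm.
by left; exists j; rewrite opT_shift.
Qed.

Lemma reachable_genS : reachable genS 1.
Proof.
move=> m hm; apply: rst_step; split; [done | split].
  exact: univStab_shift balanced_genS hm.
by right; rewrite opS_shift.
Qed.

Lemma balanced_decomp c b : balanced c b -> c = genS *~ b - \sum_j genT j *~ c j.
Proof.
move=> bal; apply/ffunP => i; rewrite !ffunE ffunMzE sum_ffunE ffunE.
under eq_bigr do rewrite ffunMzE ffunE mulrzz mulrBl.
have pick : \sum_j (i == j)%:R * c j = c i.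
  rewrite (bigD1 i) //= eqxx mul1r big1 ?addr0 // => j.
  by rewrite eq_sym => /negPf ->; rewrite mul0r.
rewrite sumrB -mulr_sumr pick bal mulrzz; ring.
Qed.

Lemma reachable_balanced c b : balanced c b -> reachable c b.
Proof.
move=> bal; rewrite (balanced_decomp bal).
have [sum_bal sum_reach] :
    balanced (\sum_j genT j *~ c j) 0 /\ reachable (\sum_j genT j *~ c j) 0.
  apply: (big_ind (fun v => balanced v 0 /\ reachable v 0)).
  - by split; [exact: balanced0 | exact: reachable0].
  - move=> v w [bal_v r_v] [bal_w r_w]; rewrite -[0 : int](addr0 0).
    by split; [exact: balancedD | exact: reachableD].
  - move=> j _; rewrite -(mul0r (c j)); split.
      exact: balancedMz (balanced_genT j).
    exact: reachableMz (balanced_genT j) (reachable_genT j).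
have := reachableD (balancedMz b balanced_genS) (reachableMz b balanced_genS reachable_genS)
  (reachableN sum_bal sum_reach).
by rewrite mul1r oppr0 addr0.
Qed.

(* Translate by c_i = -m(2,0,{i}) for i <> 1; at i = 1 keep the remainder of
   the total sum modulo 2g - 2, the quotient being absorbed by b. *)
Lemma normalized_exists m : exists c b, balanced c b /\ normalized g n (shift c b m).
Proof.
pose x i := m 2%N 0%N [set i]; pose D := 2 * g%:Z - 2.
have D_gt0 : 0 < D by rewrite /D; lia.
set q := ((\sum_i x i) %/ D)%Z; set r := ((\sum_i x i) %% D)%Z.
have sum_x : \sum_i x i = q * D + r := divz_eq _ _.
exists [ffun i => (i == i0)%:R * r - x i], (- q); split; [|split].
- rewrite /balanced; under eq_bigr do rewrite ffunE.
  by rewrite sumrB -mulr_suml sum_indicator mul1r sum_x /D; ring.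
- rewrite set_oneE shift_set1 ffunE eqxx mul1r addrC subrK.
  have := ltz_pmod (\sum_i x i) D_gt0; rewrite -/r -/D => r_lt.
  by apply/andP; split; [exact: modz_ge0 (lt0r_neq0 D_gt0) | lia].
- move=> i; rewrite -neq_i0E => /negPf i_neq.
  by rewrite shift_set1 ffunE i_neq mul0r sub0r addrN.
Qed.

Lemma normalized_unique m c b : normalized g n m -> balanced c b ->
  normalized g n (shift c b m) -> c = 0 /\ b = 0.
Proof.
rewrite /normalized set_oneE => -[window zero] bal [window' zero'].
have c_off k : k != i0 -> c k = 0.
  rewrite neq_i0E => k_gt0.
  by have := zero' k k_gt0; rewrite shift_set1 zero // add0r.
have c_i0 : c i0 = b * (2 * g%:Z - 2).
  by rewrite -bal (bigD1 i0) //= big1 ?addr0 // => k /c_off.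
move: window'; rewrite shift_set1 c_i0 => window'.
have b0 := window_unique g_ge2 window window'.
split => //; apply/ffunP => k; rewrite ffunE.
by have [->|/c_off] := eqVneq k i0; rewrite ?c_i0 ?b0 ?mul0r.
Qed.

End MarkingOne.
End UniversalStability.

Theorem mainTheorem8 (g n : nat) (d : int) :
  (2 <= g)%N -> (1 <= n)%N ->
  (forall j : 'I_n, (1 <= val j)%N ->
     (forall m, UnivStab g n d m -> UnivStab g n d (opT g n j m)) /\
     (forall m', UnivStab g n d m' ->
        exists! m, UnivStab g n d m /\ opT g n j m = m')) /\
  ((forall m, UnivStab g n d m -> UnivStab g n d (opS g n m)) /\
   (forall m', UnivStab g n d m' ->
      exists! m, UnivStab g n d m /\ opS g n m = m')) /\
  (forall m, UnivStab g n d m ->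
     exists! m', [/\ UnivStab g n d m', normalized g n m' & same_orbit g n d m m']).
Proof.
move=> g_ge2 n_gt0.
pose i0 : 'I_n := Ordinal n_gt0.
have i0_val : val i0 = 0%N by [].
split; [|split].
- move=> j j_gt0; rewrite (opT_shift g i0_val j_gt0).
  exact (univStab_shift_bij d (balanced_genT g i0 j)).
- by rewrite (opS_shift g i0_val); exact (univStab_shift_bij d (balanced_genS g i0)).
move=> m hm; have [c [b [bal norm]]] := normalized_exists g_ge2 i0_val m.
have reach := reachable_balanced i0_val bal hm.
exists (shift g c b m); split; first by split=> //; exact: univStab_shift.
move=> m' [_ norm' orbit'].
have : same_orbit g n d (shift g c b m) m' by apply: rst_trans orbit'; apply: rst_sym.
move=> /(same_orbit_shift i0_val) [c' [b' [bal' m'E]]]; rewrite m'E in norm' *.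
by have [-> ->] := normalized_unique g_ge2 i0_val norm bal' norm'; rewrite shift0.
Qed.
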